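(* 1) For each odd $n\ge3$ there exists a binary Euclidean almost self-dual $[2n,n,\min\{4,n\}]_2$ code; in particular, for each odd $n\ge5$ there exists a binary Euclidean almost self-dual $[2n,n,4]_2$ code. 2) For each even $n\ge2$ there exists a binary Euclidean self-dual $[2n,n,\min\{4,n\}]_2$ code; in particular, for each even $n\ge4$ there exists a binary Euclidean self-dual $[2n,n,4]_2$ code.
   Context: For a binary linear $[n,k,d]_2$ code $\mathcal{C}$, $\mathrm{Hull}_E(\mathcal{C})=\mathcal{C}\cap\mathcal{C}^{\perp_E}$ with $\perp_E$ the dual under $\sum_ix_iy_i$. $\mathcal{C}$ is Euclidean self-dual if $\mathcal{C}=\mathcal{C}^{\perp_E}$. $\mathcal{C}$ is almost Euclidean self-orthogonal if $\dim(\mathrm{Hull}_E(\mathcal{C}))=k-1$, and almost Euclidean self-dual if it is almost Euclidean self-orthogonal and $n=2k$. *)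

(* Binary linear codes of length n are represented by a
   square matrix C : 'M['F_2]_n whose row space is the code. *)
From HB Require Import structures.
From mathcomp Require Import all_boot all_order all_algebra.
Set Implicit Arguments. Unset Strict Implicit. Unset Printing Implicit Defensive.
Import GRing.Theory.
Local Open Scope ring_scope.

Definition wt n (u : 'rV['F_2]_n) : nat := #|[set i : 'I_n | u 0 i != 0]|.

Definition dualE n (C : 'M['F_2]_n) : 'M['F_2]_n := kermx C^T.

Definition hullE n (C : 'M['F_2]_n) : 'M['F_2]_n := (C :&: dualE C)%MS.

Definition is_code n k d (C : 'M['F_2]_n) : Prop :=
  \rank C = k /\
  (exists u : 'rV['F_2]_n, (u <= C)%MS /\ u != 0 /\ wt u = d) /\
  (forall u : 'rV['F_2]_n, (u <= C)%MS -> u != 0 -> (d <= wt u)%N).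

Definition self_dualE n (C : 'M['F_2]_n) : Prop := (C == dualE C)%MS.

(* dim Hull = k - 1 (stated as dim Hull + 1 = k to avoid truncated subtraction). *)
Definition almost_self_orthogonalE n (C : 'M['F_2]_n) : Prop :=
  (\rank (hullE C)).+1 = \rank C.

Definition almost_self_dualE n (C : 'M['F_2]_n) : Prop :=
  almost_self_orthogonalE C /\ n = (2 * \rank C)%N.

From mathcomp Require Import all_boot all_order all_algebra zify.
Set Implicit Arguments. Unset Strict Implicit. Unset Printing Implicit Defensive.
Import GRing.Theory.
Local Open Scope ring_scope.

(* All four codes are the row space of G = [I | J - I] (J the all-ones
   matrix).  The message w encodes to (w, w (J - I)), and w (J - I) equals w
   when wt w is even and the complement of w when wt w is odd; so nonzero
   codewords weigh 2 wt w >= 4 or n, both values being attained.  Over F_2,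
   G G^T = I + (J - I)^2 = n J: for even n the code is self-orthogonal of
   dimension n in length 2n, hence self-dual, and for odd n its Gram matrix
   J has rank one, so the hull has codimension one. *)

Lemma F2_nat m : m%:R = (odd m)%:R :> 'F_2.
Proof. by rewrite -Fp_nat_mod // modn2. Qed.

Lemma F2_cases (x : 'F_2) : x = 0 \/ x = 1.
Proof. by case: x => [[|[|//]]] ?; [left|right]; apply/val_inj. Qed.

Lemma wtE n (u : 'rV['F_2]_n) : wt u = (\sum_i (u 0%R i != 0%R))%N.
Proof. by rewrite /wt -sum1_card big_mkcond /=; apply: eq_bigr => i _; rewrite inE. Qed.

Lemma wt_row_mx n1 n2 (a : 'rV['F_2]_n1) (b : 'rV['F_2]_n2) :
  wt (row_mx a b) = (wt a + wt b)%N.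
Proof.
by rewrite !wtE big_split_ord; congr (_ + _)%N; apply: eq_bigr => i _;
  rewrite ?row_mxEl ?row_mxEr.
Qed.

Section Weight.

Variable n : nat.
Implicit Types u w : 'rV['F_2]_n.

Lemma wt_eq0 u : (wt u == 0%N) = (u == 0).
Proof.
rewrite /wt cards_eq0; apply/eqP/eqP => [supp0|->].
  apply/matrixP => i j; rewrite ord1 mxE; apply/eqP/negbNE.
  by rewrite -[_ != 0](in_set (fun j => u 0 j != 0)) supp0 inE.
by apply/setP => i; rewrite !inE mxE eqxx.
Qed.

Lemma wt_max u : (wt u <= n)%N.
Proof. by rewrite /wt -[X in (_ <= X)%N](card_ord n) max_card. Qed.

Lemma sum_row_F2 u : \sum_i u 0 i = (odd (wt u))%:R.
Proof.
rewrite -F2_nat wtE natr_sum; apply: eq_bigr => i _.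
by case: (F2_cases (u 0 i)) => ->; apply/eqP.
Qed.

Lemma exists_wt k : (k <= n)%N -> exists u, wt u = k.
Proof.
move=> le_kn; exists (\row_(i < n) (i < k)%:R); rewrite wtE.
rewrite (eq_bigr (fun i : 'I_n => nat_of_bool (i < k)%N)) => [|i _]; last first.
  by rewrite mxE; case: (i < k)%N; rewrite ?oner_eq0 ?eqxx.
rewrite -(big_mkord xpredT (fun i => nat_of_bool (i < k)%N)).
have -> : (\sum_(0 <= i < n) (i < k))%N = (\sum_(0 <= i < n | i < k) 1)%N.
  by rewrite [RHS]big_mkcond.
by rewrite -(big_nat_widen 0 k n xpredT (fun=> 1%N) le_kn) sum_nat_const_nat muln1 subn0.
Qed.

End Weight.

Lemma mxrank_const1 (F : fieldType) m p :
  (0 < m)%N -> (0 < p)%N -> \rank (const_mx 1 : 'M[F]_(m, p)) = 1%N.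
Proof.
move=> m_gt0 p_gt0; apply/eqP; rewrite eqn_leq; apply/andP; split.
  have -> : const_mx 1 = (const_mx 1 : 'cV[F]_m) *m (const_mx 1 : 'rV_p).
    by apply/matrixP => i j; rewrite !mxE big_ord1 !mxE mulr1.
  exact: leq_trans (mxrankM_maxr _ _) (rank_leq_row _).
rewrite lt0n mxrank_eq0; apply/eqP => /matrixP /(_ (Ordinal m_gt0) (Ordinal p_gt0)).
by rewrite !mxE; apply/eqP; rewrite oner_eq0.
Qed.

Lemma mxrank_gram_hullE n (C : 'M['F_2]_n) :
  (\rank (C *m C^T) + \rank (hullE C))%N = \rank C.
Proof. exact: mxrank_mul_ker. Qed.

Lemma almost_self_orthogonalE_gram n (C : 'M['F_2]_n) :
  \rank (C *m C^T) = 1%N -> almost_self_orthogonalE C.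
Proof.
by move=> gram_rank1; rewrite /almost_self_orthogonalE -(mxrank_gram_hullE C) gram_rank1.
Qed.

Lemma self_dualE_gram n (C : 'M['F_2]_n) :
  C *m C^T = 0 -> n = (2 * \rank C)%N -> self_dualE C.
Proof.
move=> gram0 dimC; have C_sub_dual : (C <= dualE C)%MS by rewrite sub_kermx gram0.
rewrite /self_dualE -(mxrank_leqif_eq C_sub_dual).2 mxrank_ker mxrank_tr.
by apply/eqP; lia.
Qed.

Section DoubledCirculantCode.

Variable n : nat.
Implicit Types w : 'rV['F_2]_n.

Definition gen_IJ : 'M['F_2]_(n, n + n) := row_mx 1%:M (const_mx 1 - 1%:M).

Definition code_IJ : 'M['F_2]_(n + n) := col_mx gen_IJ 0.

Lemma mul_JsubI_entry w j :
  (w *m (const_mx 1 - 1%:M)) 0 j = (odd (wt w))%:R - w 0 j.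
Proof.
rewrite mulmxBr mulmx1 !mxE -sum_row_F2; congr (_ - _).
by apply: eq_bigr => i _; rewrite mxE mulr1.
Qed.

Lemma wt_mul_JsubI w :
  wt (w *m (const_mx 1 - 1%:M)) = if odd (wt w) then (n - wt w)%N else wt w.
Proof.
have supp : [set j | (w *m (const_mx 1 - 1%:M)) 0 j != 0] =
    if odd (wt w) then ~: [set j | w 0 j != 0] else [set j | w 0 j != 0].
  apply/setP => j; rewrite inE mul_JsubI_entry.
  by case: (odd _); rewrite !inE; case: (F2_cases (w 0 j)) => ->.
by rewrite /wt supp; case: ifP => // _; rewrite cardsCs setCK card_ord.
Qed.

Lemma wt_mul_gen_IJ w : wt (w *m gen_IJ) = if odd (wt w) then n else (wt w).*2.
Proof.
rewrite mul_mx_row mulmx1 wt_row_mx wt_mul_JsubI.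
by case: ifP => _; rewrite ?subnKC ?wt_max ?addnn.
Qed.

Lemma code_IJ_gen : (code_IJ :=: gen_IJ)%MS.
Proof. exact: eqmx_trans (eqmx_sym (addsmxE _ _)) (addsmx0 _ _). Qed.

Lemma rank_gen_IJ : \rank gen_IJ = n.
Proof.
apply/eqP; rewrite eqn_leq rank_leq_row /=.
have right_inv : gen_IJ *m col_mx 1%:M 0 = 1%:M.
  by rewrite mul_row_col mulmx0 addr0 mulmx1.
by rewrite -{1}(mxrank1 'F_2 n) -right_inv mxrankM_maxl.
Qed.

Lemma gram_gen_IJ : gen_IJ *m gen_IJ^T = n%:R *: const_mx 1.
Proof.
have JJ : (const_mx 1 : 'M['F_2]_n) *m const_mx 1 = n%:R *: (const_mx 1 : 'M_n).
  apply/matrixP => i j; rewrite !mxE (eq_bigr (fun _ => 1)) ?sumr_const ?card_ord.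
    by rewrite mulr1.
  by move=> k _; rewrite !mxE mulr1.
rewrite tr_row_mx mul_row_col trmx1 mulmx1 linearB /= trmx_const trmx1.
rewrite mulmxBl !mulmxBr !mulmx1 mul1mx JJ.
apply/matrixP => i j; rewrite !mxE mulr1 F2_nat.
by case: (odd n); case: (i == j); apply/eqP.
Qed.

Lemma gram_code_IJ :
  code_IJ *m code_IJ^T = col_mx (row_mx (n%:R *: const_mx 1) 0) 0.
Proof.
by rewrite tr_col_mx trmx0 mul_col_mx mul0mx mul_mx_row mulmx0 gram_gen_IJ.
Qed.

Lemma rank_code_IJ : \rank code_IJ = n.
Proof. by rewrite code_IJ_gen rank_gen_IJ. Qed.

Lemma code_IJ_self_dual : ~~ odd n -> self_dualE code_IJ.
Proof.
move=> n_even; apply: self_dualE_gram; last by rewrite rank_code_IJ mul2n addnn.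
by rewrite gram_code_IJ F2_nat (negbTE n_even) scale0r row_mx0 col_mx0.
Qed.

Lemma code_IJ_almost_self_dual : odd n -> almost_self_dualE code_IJ.
Proof.
move=> n_odd; split; last by rewrite rank_code_IJ mul2n addnn.
apply: almost_self_orthogonalE_gram.
have n_gt0 : (0 < n)%N by case: n n_odd.
by rewrite gram_code_IJ rank_col_mx0 rank_row_mx0 F2_nat n_odd scale1r mxrank_const1.
Qed.

Lemma code_IJ_is_code : (2 <= n)%N -> is_code n (minn 4 n) code_IJ.
Proof.
move=> n_ge2; split; first exact: rank_code_IJ.
split.
  have [w wt_w] : exists w, wt w = (if (n <= 4)%N then 1 else 2)%N.
    by apply: exists_wt; case: ifP => _; lia.
  have wt_cw : wt (w *m gen_IJ) = minn 4 n.
    by rewrite wt_mul_gen_IJ wt_w; case: leqP => n4 /=; lia.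
  exists (w *m gen_IJ); rewrite code_IJ_gen submxMl -wt_eq0 wt_cw.
  by split => //; split => //; lia.
move=> u; rewrite code_IJ_gen => /submxP[w ->]; rewrite -!wt_eq0 wt_mul_gen_IJ.
case: ifP => [_ _|w_even cw_nz]; first by rewrite geq_minr.
have : wt w != 1%N by apply: contraFneq w_even => ->.
by move: cw_nz; rewrite -addnn; lia.
Qed.

End DoubledCirculantCode.

Theorem theorem11 :
  (forall n : nat, odd n -> (3 <= n)%N ->
     exists C : 'M['F_2]_(2 * n),
       is_code n (minn 4 n) C /\ almost_self_dualE C) /\
  (forall n : nat, odd n -> (5 <= n)%N ->
     exists C : 'M['F_2]_(2 * n), is_code n 4 C /\ almost_self_dualE C) /\
  (forall n : nat, ~~ odd n -> (2 <= n)%N ->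
     exists C : 'M['F_2]_(2 * n),
       is_code n (minn 4 n) C /\ self_dualE C) /\
  (forall n : nat, ~~ odd n -> (4 <= n)%N ->
     exists C : 'M['F_2]_(2 * n), is_code n 4 C /\ self_dualE C).
Proof.
have odd_case n : odd n -> (3 <= n)%N ->
    exists C : 'M['F_2]_(2 * n), is_code n (minn 4 n) C /\ almost_self_dualE C.
  move=> n_odd n_ge3; rewrite mul2n -addnn; exists (code_IJ n).
  by split; [apply: code_IJ_is_code; lia | exact: code_IJ_almost_self_dual].
have even_case n : ~~ odd n -> (2 <= n)%N ->
    exists C : 'M['F_2]_(2 * n), is_code n (minn 4 n) C /\ self_dualE C.
  move=> n_even n_ge2; rewrite mul2n -addnn; exists (code_IJ n).
  by split; [exact: code_IJ_is_code | exact: code_IJ_self_dual].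
split; first exact: odd_case.
split.
  by move=> n n_odd n_ge5; rewrite -(minn_idPl (ltnW n_ge5)); apply: odd_case; lia.
split; first exact: even_case.
by move=> n n_even n_ge4; rewrite -(minn_idPl n_ge4); apply: even_case; lia.
Qed.
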